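(* Consider the state space model and the extended alive particle filter (APF) described in the context, with $N\ge1$. For all integers $t\le T$ and $h\ge 0$ with $t-h\ge 1$, $$\mathbb{E}\left[\prod_{t'=t-h}^{t} \frac{\sum_{n=1}^N w_{t'}^{(n)}}{P_{t'} - 1}\,\middle|\, \mathcal{F}_{t-h-1}\right] = \sum_{n=1}^N \frac{w_{t-h-1}^{(n)}}{\sum_{m=1}^N w_{t-h-1}^{(m)}}\, p\!\left(y_{t-h:t} \,\middle|\, x_{t-h-1}^{(n)}\right).$$
   Context: State space model: $x_0\sim p(x_0)$; for $t=1,\dots,T$, $x_t \sim f_t(x_t\mid x_{t-1})$ and $y_t\sim g_t(y_t\mid x_t)$; the observations $y_1,\dots,y_T$ are fixed. For $s\ge t$, $p(y_{t:s}\mid x_{t-1})$ denotes the conditional density of $y_t,\dots,y_s$ given $x_{t-1}$ under this model. Extended alive particle filter with $N$ particles: initially draw $x_0^{(1)},\dots,x_0^{(N)}$ independently from $p(x_0)$ and set $w_0^{(n)}=1$. For each $t=1,\dots,T$: set $P_t\gets 0$; for each $n=1,\dots,N+1$, repeat the following until the weight is positive: draw an index $a$ from the categorical distribution with probabilities $w_{t-1}^{(m)}/\sum_{l=1}^N w_{t-1}^{(l)}$, $m=1,\dots,N$; draw $x_t^{(n)}\sim f_t(\cdot\mid x_{t-1}^{(a)})$; increment $P_t$ by one; set $w_t^{(n)} = g_t(y_t\mid x_t^{(n)})$. Thus $P_t$ is the total number of propagations (including those for the $(N+1)$-th particle) at time $t$. $\mathcal{F}_t=\{x_t^{(n)},w_t^{(n)}\}_{n=1}^N$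 denotes the states and weights of the first $N$ particles at time $t$. *)

From HB Require Import structures.
From mathcomp Require Import all_boot all_order all_algebra.
From mathcomp Require Import all_classical all_reals all_analysis.
Set Implicit Arguments. Unset Strict Implicit. Unset Printing Implicit Defensive.
Import Order.TTheory GRing.Theory Num.Theory.
Local Open Scope ring_scope.
Local Open Scope ereal_scope.

(*   f t : probability kernel x_{t-1} |-> law of x_t   (transition f_t)      *)
(*   g t x y : observation density g_t(y | x), y t : fixed observation y_t   *)
(* A particle configuration F_t = {x^(n), w^(n)}_{n=1..N} is a seq of        *)
(* (state, weight) pairs of size N.                                          *)

Section APF.
Context {R : realType} {d dy : measure_display}
  (X : measurableType d) (Y : measurableType dy).

Definition config := seq (X * R).

Definition total_weight (c : config) : R := (\sum_(p <- c) p.2)%R.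

(* Expectation of phi(x) when one "try" of the APF at time t is made from  *)
(* configuration c: draw an index a with probability w^(a)/sum_l w^(l), then *)
(* draw x ~ f_t(. | x^(a)).                                                  *)
Definition try_exp (f : nat -> R.-pker X ~> X) (t : nat) (c : config)
  (phi : X -> \bar R) : \bar R :=
  \sum_(p <- c) ((p.2 / total_weight c)%:E * \int[f t p.1]_x phi x).

(* Expectation of psi(k, x) where (k, x) is the outcome of the loop         *)
(* "repeat a try until the weight G(x) is positive": k is the number of       *)
(* tries made and x the accepted state.  [tries_exp n] is the contribution   *)
(* of the event "the loop stops exactly at try n+1" (n failed tries first). *)
Fixpoint tries_exp (E : (X -> \bar R) -> \bar R) (G : X -> R) (n : nat)
  (psi : nat -> X -> \bar R) : \bar R :=
  match n with
  | 0 => E (fun x => if (0 < G x)%R then psi 1%N x else 0)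
  | n'.+1 => E (fun x => if (0 < G x)%R then 0
                       else tries_exp E G n' (fun k y => psi k.+1 y))
  end.

Definition loop_exp (E : (X -> \bar R) -> \bar R) (G : X -> R)
  (psi : nat -> X -> \bar R) : \bar R :=
  \sum_(0 <= n <oo) tries_exp E G n psi.

(* Independent loops for m particles: Phi receives the list of outcomes     *)
(* (k_n, x_n), n = 1..m, in order.                                           *)
Fixpoint loops_exp (E : (X -> \bar R) -> \bar R) (G : X -> R) (m : nat)
  (Phi : seq (nat * X) -> \bar R) : \bar R :=
  match m with
  | 0 => Phi [::]
  | m'.+1 => loop_exp E G (fun k x =>
               loops_exp E G m' (fun rest => Phi ((k, x) :: rest)))
  end.

(* One step of the extended APF at time t, from F_{t-1} = c with N          *)
(* particles: expectation of Phi(F_t, P_t).  N+1 particles are propagated;   *)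
(* F_t keeps the first N (with weights w = g_t(y_t | x)) and P_t is the      *)
(* total number of propagations.                                             *)
Definition apf_step_exp (N : nat) (f : nat -> R.-pker X ~> X)
  (g : nat -> X -> Y -> R) (y : nat -> Y) (t : nat) (c : config)
  (Phi : config -> nat -> \bar R) : \bar R :=
  loops_exp (try_exp f t c) (fun x => g t x (y t)) N.+1 (fun outs =>
    Phi [seq (o.2, g t o.2 (y t)) | o <- take N outs]
        (sumn [seq o.1 | o <- outs])).

(* Conditional expectation given F_s = c of a functional of                 *)
(* (F_{s+1}, P_{s+1}), ..., (F_{s+n}, P_{s+n}) (listed in time order):      *)
(* the iterated integral w.r.t. the Markov transitions of the APF.           *)
Fixpoint apf_cond_exp (N : nat) (f : nat -> R.-pker X ~> X)
  (g : nat -> X -> Y -> R) (y : nat -> Y) (s n : nat) (c : config)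
  (F : seq (config * nat) -> \bar R) : \bar R :=
  match n with
  | 0 => F [::]
  | n'.+1 => apf_step_exp N f g y s.+1 c (fun c' P =>
               apf_cond_exp N f g y s.+1 n' c' (fun rest => F ((c', P) :: rest)))
  end.

(* p(y_{t : t+len-1} | x_{t-1} = x) *)
Fixpoint obs_density (f : nat -> R.-pker X ~> X) (g : nat -> X -> Y -> R)
  (y : nat -> Y) (t len : nat) (x : X) : \bar R :=
  match len with
  | 0 => 1
  | len'.+1 => \int[f t x]_x' ((g t x' (y t))%:E
                                * obs_density f g y t.+1 len' x')
  end.

End APF.

From HB Require Import structures.
From mathcomp Require Import all_boot all_order all_algebra.
From mathcomp Require Import all_classical all_reals all_analysis.
From mathcomp Require Import zify ring.
From mathcomp Require Import measurable_realfun.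
Set Implicit Arguments. Unset Strict Implicit. Unset Printing Implicit Defensive.
Import Order.TTheory GRing.Theory Num.Theory.
Local Open Scope ring_scope.
Local Open Scope ereal_scope.

(* Given F_s, the N + 1 propagation loops of one APF step are independent; each
   stops after a geometric number of trials with success probability
   z = P(g > 0), and its accepted state is independent of that number.  Hence
   P_{s+1} is negative binomial, E[1 / (P_{s+1} - 1)] = z / N, and
   E[sum_{n <= N} w_n q(x_n) / (P_{s+1} - 1)] = N E[g q | g > 0] z / N = E[g q],
   the expectation of g q after a single selection-mutation trial.  Taking
   q = p(y_{s+2:t} | .) and conditioning step by step, the total weight of each
   F_{s+1} cancels the normalisation of the next factor, so the theorem follows
   by induction on h. *)

Lemma sum_bin_hockey_stick (m t : nat) :
  (\sum_(0 <= n < t.+1) 'C(t - n + m, m) = 'C(t + m.+1, m.+1))%N.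
Proof.
elim: t => [|t IH]; first by rewrite big_nat1 subn0 add0n !binn.
rewrite big_nat_recl // subn0.
under eq_bigr do rewrite subSS.
by rewrite IH [(t.+1 + m.+1)%N]addSn binS addnC addSnnS.
Qed.

Section nonnegative_series.
Context {R : realType}.
Implicit Types (x : R) (u : nat -> \bar R).

Lemma nneseries_antidiagonal (b : nat -> nat -> \bar R) :
  (forall n s, 0 <= b n s) ->
  \sum_(0 <= n <oo) \sum_(0 <= s <oo) b n s =
  \sum_(0 <= t <oo) \sum_(0 <= n < t.+1) b n (t - n)%N.
Proof.
move=> b0.
pose bt n t := if (n <= t)%N then b n (t - n)%N else 0.
have bt0 n t : 0 <= bt n t by rewrite /bt; case: ifP.
have shift n : \sum_(0 <= s <oo) b n s = \sum_(0 <= t <oo) bt n t.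
  rewrite [RHS](nneseries_split 0 n) // add0n big_nat_cond big1; last first.
    by move=> i /andP[/andP[_ hi] _]; rewrite /bt leqNgt hi.
  rewrite add0e -(@nneseries_addn _ (bt n) n) //.
  by apply: eq_eseriesr => i _; rewrite /bt leq_addl addnK.
have truncate t : \sum_(0 <= n <oo) bt n t = \sum_(0 <= n < t.+1) b n (t - n)%N.
  rewrite (nneseries_split 0 t.+1) //= add0n eseries0 ?adde0; last first.
    by move=> i hi _; rewrite /bt leqNgt hi.
  rewrite big_nat_cond [RHS]big_nat_cond.
  by apply: eq_bigr => i /andP[/andP[_ hi] _]; rewrite /bt -ltnS hi.
under eq_eseriesr do rewrite shift.
by rewrite nneseries_interchange //; under eq_eseriesr do rewrite truncate.
Qed.

Lemma nneseries_geometric x : (0 <= x)%R -> (x < 1)%R ->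
  \sum_(0 <= n <oo) (x ^+ n)%:E = ((1 - x)^-1)%:E.
Proof.
move=> x0 x1; apply/cvg_lim => //.
apply: cvg_EFin; first by apply: nearW => n; rewrite sumEFin.
have -> : fine \o (fun n => \sum_(0 <= k < n) (x ^+ k)%:E) = series (geometric 1 x).
  apply/funext => n /=; rewrite sumEFin /series /=.
  by apply: eq_bigr => i _; rewrite mul1r.
by have := @cvg_geometric_series R 1 x; rewrite mul1r; apply; rewrite ger0_norm.
Qed.

Lemma nneseries_eq0 u : (forall n, 0 <= u n) ->
  \sum_(0 <= n <oo) u n = 0 -> forall n, u n = 0.
Proof.
move=> u0 su0 n; apply/eqP; rewrite eq_le u0 andbT -su0.
apply: le_trans (nneseries_lim_ge n.+1 (fun i _ _ => u0 i)).
by rewrite big_nat_recr //= leeDr // sume_ge0.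
Qed.

(* Unlike [nneseriesZl], the factor may be [+oo]. *)
Lemma ge0_nneseriesZr u (k : \bar R) : (forall n, 0 <= u n) -> 0 <= k ->
  \sum_(0 <= n <oo) (u n * k) = (\sum_(0 <= n <oo) u n) * k.
Proof.
move=> u0; case: k => [k| |] // k0.
  by under eq_eseriesr do rewrite muleC; rewrite nneseriesZl // muleC.
have [su0|su_neq0] := eqVneq (\sum_(0 <= n <oo) u n) 0.
  rewrite su0 mul0e; apply: eseries0 => n _ _.
  by rewrite (nneseries_eq0 u0 su0) mul0e.
have [n un_neq0] : exists n, u n != 0.
  apply/not_existsP => uE; apply/(negP su_neq0)/eqP; apply: eseries0 => i _ _.
  by apply/eqP/negPn/negP; exact: uE.
have un_gt0 : 0 < u n by rewrite lt_def un_neq0 u0.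
rewrite gt0_muley; last by rewrite lt_def su_neq0 nneseries_ge0.
apply/eqP; rewrite eq_le leey /=.
apply: le_trans (nneseries_lim_ge n.+1 (fun i _ _ => mule_ge0 (u0 i) k0)).
rewrite big_nat_recr //= gt0_muley // lee_paddl //.
by rewrite sume_ge0 // => i _; rewrite mule_ge0.
Qed.

End nonnegative_series.

Section negative_binomial_series.
Context {R : realType}.
Variable x : R.
Hypothesis x0 : (0 <= x)%R.

(* [negbin_series x m A j] is the sum over n_1, ..., n_m of
   x^(n_1 + ... + n_m) A (j + n_1 + ... + n_m + m): up to the factor
   (1 - x)^m, the expectation of A (j + P) when P is the total number of
   trials of m independent geometric experiments with failure probability x. *)
Fixpoint negbin_series (m : nat) (A : nat -> \bar R) (j : nat) : \bar R :=
  if m is m'.+1 then \sum_(0 <= n <oo) ((x ^+ n)%:E * negbin_series m' A (j + n).+1)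
  else A j.

Lemma negbin_series_ge0 m A j : (forall i, 0 <= A i) -> 0 <= negbin_series m A j.
Proof.
move=> A0; elim: m j => [|m IH] j //=.
by apply: nneseries_ge0 => n _ _; rewrite mule_ge0 // lee_fin exprn_ge0.
Qed.

Lemma negbin_seriesE m A j : (forall i, 0 <= A i) ->
  negbin_series m.+1 A j =
  \sum_(0 <= s <oo) (('C(s + m, m)%:R * x ^+ s)%:E * A (j + s + m).+1%N).
Proof.
move=> A0; elim: m j => [|m IH] j.
  by apply: eq_eseriesr => n _; rewrite bin0 mul1r addn0.
have inner n : (x ^+ n)%:E * negbin_series m.+1 A (j + n).+1 =
    \sum_(0 <= s <oo) ((x ^+ n * ('C(s + m, m)%:R * x ^+ s))%:E
                         * A ((j + n).+1 + s + m).+1%N).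
  rewrite IH -nneseriesZl; last first.
    by move=> i _; rewrite mule_ge0 // lee_fin mulr_ge0 ?exprn_ge0.
  by apply: eq_eseriesr => i _; rewrite muleA EFinM.
rewrite [LHS]/=; under eq_eseriesr do rewrite inner.
rewrite nneseries_antidiagonal; last first.
  by move=> n s; rewrite mule_ge0 // lee_fin !mulr_ge0 ?exprn_ge0.
apply: eq_eseriesr => t _; rewrite big_nat_cond.
rewrite (eq_bigr (fun n => (('C(t - n + m, m)%:R * x ^+ t)%:E
                   * A (j + t + m.+1).+1%N))); last first.
  move=> n /andP[/andP[_ hn] _]; rewrite ltnS in hn; congr (_%:E * A _).
    by rewrite mulrCA -exprD subnKC.
  lia.
rewrite -big_nat_cond -ge0_sume_distrl; last first.
  by move=> n _; rewrite lee_fin mulr_ge0 ?exprn_ge0.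
by rewrite sumEFin -big_distrl /= -natr_sum sum_bin_hockey_stick addnS.
Qed.

Hypothesis x1 : (x < 1)%R.

Lemma negbin_series1 m j : negbin_series m (fun=> 1) j = (((1 - x)^-1) ^+ m)%:E.
Proof.
elim: m j => [|m IH] j //=.
under eq_eseriesr do rewrite IH muleC.
rewrite nneseriesZl; last by move=> i _; rewrite lee_fin exprn_ge0.
by rewrite nneseries_geometric // -EFinM exprS mulrC.
Qed.

(* For P the total number of trials of N + 1 geometric experiments with
   success probability z = 1 - x, E[1 / (P - 1)] = z / N. *)
Lemma negbin_series_inv_pred N a : (0 < N)%N -> (0 <= a)%R ->
  negbin_series N.+1 (fun P => (a / P.-1%:R)%:E) 0 =
  (a / N%:R * ((1 - x)^-1) ^+ N)%:E.
Proof.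
case: N => // n _ a0.
rewrite negbin_seriesE; last by move=> i; rewrite lee_fin divr_ge0.
rewrite EFinM -(negbin_series1 n.+1 0) negbin_seriesE // -nneseriesZl; last first.
  by move=> i _; rewrite mule_ge0 // lee_fin mulr_ge0 ?exprn_ge0.
apply: eq_eseriesr => s _; rewrite mule1 -EFinM /= add0n !addnS /=; congr _%:E.
have binRE : ('C(s + n.+1, n.+1)%:R * n.+1%:R = 'C(s + n, n)%:R * (s + n).+1%:R :> R)%R.
  by rewrite -!natrM mulnC addnS -mul_bin_diag mulnC.
have n_neq0 : (n.+1%:R : R) != 0%R by rewrite pnatr_eq0.
rewrite -addnS (_ : 'C(s + n.+1, n.+1)%:R =
  'C(s + n, n)%:R * (s + n).+1%:R / n.+1%:R :> R)%R.
  by field; rewrite nat1r -natrD !pnatr_eq0 addnS.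
by apply: (mulIf n_neq0); rewrite binRE divfK.
Qed.

End negative_binomial_series.

Section repeated_trials.
Context {R : realType} {d : measure_display} {X : measurableType d}.
Variables (E : (X -> \bar R) -> \bar R) (G : X -> R).
Hypothesis E_ge0 : forall phi : X -> \bar R, (forall y, 0 <= phi y) -> 0 <= E phi.
Hypothesis EZ : forall (k : \bar R) (phi : X -> \bar R), 0 <= k ->
  (forall y, 0 <= phi y) -> measurable_fun setT phi ->
  E (fun y => k * phi y) = k * E phi.
Hypothesis ED : forall phi psi : X -> \bar R,
  (forall y, 0 <= phi y) -> measurable_fun setT phi ->
  (forall y, 0 <= psi y) -> measurable_fun setT psi ->
  E (fun y => phi y + psi y) = E phi + E psi.
Hypothesis mG : measurable_fun setT G.
Variables x z : R.
Hypothesis x_ge0 : (0 <= x)%R.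
Hypothesis z_ge0 : (0 <= z)%R.
Hypothesis rejectE : E (fun y => if (0 < G y)%R then 0 else 1) = x%:E.
Hypothesis acceptE : E (fun y => if (0 < G y)%R then 1 else 0) = z%:E.

Lemma count_coefS r m : (r <= m.+1)%N ->
  (r.-1%:R * z ^+ m.-1 * z + (r != 0%N)%:R * z ^+ m = r%:R * z ^+ m)%R.
Proof.
case: r => [|r] r_le; first by rewrite !mul0r addr0.
case: m r_le => [|m] r_le /=; last by rewrite -mulrA -exprSr; ring.
have -> : r = 0%N by lia.
by rewrite !mul0r add0r.
Qed.

Lemma measurable_fun_accept (a b : X -> \bar R) :
  measurable_fun setT a -> measurable_fun setT b ->
  measurable_fun setT (fun y => if (0 < G y)%R then a y else b y).
Proof.
move=> ma mb; apply: measurable_fun_ifT => //.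
by apply: measurable_fun_ltr => //; exact: measurable_cst.
Qed.

Lemma tries_exp_ge0 n psi : (forall k y, 0 <= psi k y) ->
  0 <= tries_exp E G n psi.
Proof.
elim: n psi => [|n IH] psi psi0 /=; apply: E_ge0 => y; case: ifP => //.
by move=> _; apply: IH.
Qed.

Lemma tries_exp_geometric n psi : (forall k y, 0 <= psi k y) ->
  tries_exp E G n psi =
  (x ^+ n)%:E * E (fun y => if (0 < G y)%R then psi n.+1 y else 0).
Proof.
elim: n psi => [|n IH] psi psi0; first by rewrite /= expr0 mul1e.
rewrite [LHS]/=; set T := tries_exp E G n _.
have -> : (fun y => if (0 < G y)%R then 0 else T) =
          (fun y => T * (if (0 < G y)%R then 0 else 1)).
  by apply/funext => y; case: ifP; rewrite ?mule0 ?mule1.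
rewrite EZ; last 3 first.
- by apply: tries_exp_ge0 => k y; apply: psi0.
- by move=> y; case: ifP.
- by apply: measurable_fun_accept; exact: measurable_cst.
by rewrite rejectE /T IH // muleAC -EFinM exprSr.
Qed.

Lemma loop_exp_factor (A : X -> \bar R) (B : nat -> \bar R) :
  (forall y, 0 <= A y) -> measurable_fun setT A -> (forall k, 0 <= B k) ->
  loop_exp E G (fun k y => A y * B k) =
  E (fun y => if (0 < G y)%R then A y else 0) *
  \sum_(0 <= n <oo) ((x ^+ n)%:E * B n.+1).
Proof.
move=> A0 mA B0.
have tryE n : tries_exp E G n (fun k y => A y * B k) =
    ((x ^+ n)%:E * B n.+1) * E (fun y => if (0 < G y)%R then A y else 0).
  rewrite tries_exp_geometric; last by move=> k y; rewrite mule_ge0.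
  rewrite -muleA; congr (_ * _); rewrite -EZ //; last 2 first.
  - by move=> y; case: ifP.
  - by apply: measurable_fun_accept => //; exact: measurable_cst.
  by congr E; apply/funext => y; case: ifP; rewrite ?mule0 // muleC.
rewrite /loop_exp (eq_eseriesr (fun n _ => tryE n)) ge0_nneseriesZr 1?muleC //.
- by move=> n; rewrite mule_ge0 // lee_fin exprn_ge0.
- by apply: E_ge0 => y; case: ifP.
Qed.

Variable H : X -> \bar R.
Hypothesis H_ge0 : forall y, 0 <= H y.
Hypothesis mH : measurable_fun setT H.

Let accepted_H := E (fun y => if (0 < G y)%R then H y else 0).

Lemma accept_exp_affine (C D : \bar R) : 0 <= C -> 0 <= D ->
  E (fun y => if (0 < G y)%R then C + D * H y else 0) = C * z%:E + D * accepted_H.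
Proof.
move=> C0 D0; pose acc1 y : \bar R := if (0 < G y)%R then 1 else 0.
pose accH y := if (0 < G y)%R then H y else 0.
have acc10 y : 0 <= acc1 y by rewrite /acc1; case: ifP.
have accH0 y : 0 <= accH y by rewrite /accH; case: ifP.
have macc1 : measurable_fun setT acc1.
  by apply: measurable_fun_accept; exact: measurable_cst.
have maccH : measurable_fun setT accH.
  by apply: measurable_fun_accept => //; exact: measurable_cst.
have -> : (fun y => if (0 < G y)%R then C + D * H y else 0) =
          (fun y => C * acc1 y + D * accH y).
  by apply/funext => y; rewrite /acc1 /accH; case: ifP; rewrite ?mule1 ?mule0 ?adde0.
rewrite ED; last 4 first.
- by move=> y; apply: mule_ge0.
- by apply: emeasurable_funM => //; exact: measurable_cst.
- by move=> y; apply: mule_ge0.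
- by apply: emeasurable_funM => //; exact: measurable_cst.
by rewrite !EZ // acceptE.
Qed.

(* Every loop contributes its acceptance mass [z], except that for each of the
   [r] tracked loops one such factor is traded for the accepted mass of [H]. *)
Lemma loops_exp_take_count (beta : nat -> \bar R) m r j S :
  (forall P, 0 <= beta P) -> (r <= m)%N -> 0 <= S ->
  loops_exp E G m (fun outs =>
     (S + \sum_(o <- take r outs) H o.2) * beta (j + sumn [seq o.1 | o <- outs])%N)
  = (S * (z ^+ m)%:E + (r%:R * z ^+ m.-1)%:E * accepted_H) * negbin_series x m beta j.
Proof.
move=> beta0; have accH0 : 0 <= accepted_H by apply: E_ge0 => y; case: ifP.
elim: m r j S => [|m IH] r j S; first rewrite leqn0 => /eqP -> S0.
  by rewrite /= big_nil adde0 addn0 expr0 mule1 mul0r mul0e adde0.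
move=> r_le S0.
have take_cons k y rest : S + \sum_(o <- take r ((k, y) :: rest)) H o.2 =
    (S + ((r != 0%N)%:R)%:E * H y) + \sum_(o <- take r.-1 rest) H o.2.
  by case: (r) => [|r'] /=; rewrite ?take0 ?big_nil ?big_cons ?mul0e ?mul1e ?adde0 ?addeA.
set Zm := (z ^+ m)%:E; set cmu := (r.-1%:R * z ^+ m.-1)%:E * accepted_H.
set D := ((r != 0%N)%:R * z ^+ m)%:E.
have Zm0 : 0 <= Zm by rewrite lee_fin exprn_ge0.
have D0 : 0 <= D by rewrite lee_fin mulr_ge0 ?exprn_ge0.
have cmu0 : 0 <= cmu by rewrite mule_ge0 // lee_fin mulr_ge0 ?exprn_ge0.
have first_loop k y : loops_exp E G m (fun rest =>
     (S + \sum_(o <- take r ((k, y) :: rest)) H o.2) *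
       beta (j + sumn [seq o.1 | o <- (k, y) :: rest])%N) =
   ((S * Zm + cmu) + D * H y) * negbin_series x m beta (j + k)%N.
  have SD0 : 0 <= S + ((r != 0%N)%:R)%:E * H y by rewrite adde_ge0 ?mule_ge0.
  rewrite (_ : _ + D * _ = (S + ((r != 0%N)%:R)%:E * H y) * Zm + cmu); last first.
    by rewrite ge0_muleDl ?mule_ge0 // addeAC /D EFinM muleAC.
  rewrite -IH //; last by lia.
  by congr loops_exp; apply/funext => rest; rewrite take_cons /= addnA.
rewrite [LHS]/= (_ : (fun k y => _) = fun k y =>
    ((S * Zm + cmu) + D * H y) * negbin_series x m beta (j + k)%N); last first.
  by apply/funext => k; apply/funext => y; rewrite -first_loop.
rewrite loop_exp_factor; last 3 first.
- by move=> y; rewrite !adde_ge0 // mule_ge0.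
- apply: emeasurable_funD; first exact: measurable_cst.
  by apply: emeasurable_funM => //; exact: measurable_cst.
- by move=> k; apply: negbin_series_ge0.
rewrite accept_exp_affine //; last by rewrite adde_ge0 // mule_ge0.
congr (_ * _); last by apply: eq_eseriesr => n _; rewrite addnS.
rewrite (ge0_muleDl _ (mule_ge0 S0 Zm0) cmu0) -muleA -EFinM -exprSr.
rewrite /cmu muleAC -EFinM -addeA.
rewrite -ge0_muleDl ?lee_fin ?mulr_ge0 ?exprn_ge0 // /D -EFinD.
by rewrite count_coefS.
Qed.

End repeated_trials.

Lemma total_weight_gt0 {R : realType} {d : measure_display} {X : measurableType d}
    (c : seq (X * R)) :
  (0 < size c)%N -> (forall p, p \in c -> (0 < p.2)%R) -> (0 < total_weight c)%R.
Proof.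
case: c => // p c _ c_gt0; rewrite /total_weight big_cons ltr_wpDr ?c_gt0 ?mem_head //.
by rewrite big_seq sumr_ge0 // => q qc; rewrite ltW // c_gt0 // in_cons qc orbT.
Qed.

Section selection_step.
Context {R : realType} {d : measure_display} {X : measurableType d}.
Variables (f : nat -> R.-pker X ~> X) (t : nat) (c : seq (X * R)).
Hypothesis c_ge0 : forall p, p \in c -> (0 <= p.2)%R.

Lemma total_weight_ge0 : (0 <= total_weight c)%R.
Proof. by rewrite /total_weight big_seq sumr_ge0. Qed.

Lemma total_weight_eq0 : total_weight c = 0%R -> forall p, p \in c -> p.2 = 0%R.
Proof.
move/eqP; rewrite /total_weight big_seq psumr_eq0 => [/allP c0 p pc|//].
by apply/eqP; have := c0 p pc; rewrite pc.
Qed.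

Let selection_ge0 p : p \in c -> (0 <= p.2 / total_weight c)%R.
Proof. by move=> pc; rewrite divr_ge0 ?c_ge0 ?total_weight_ge0. Qed.

Lemma try_exp_ge0 (phi : X -> \bar R) : (forall x, 0 <= phi x) ->
  0 <= try_exp f t c phi.
Proof.
move=> phi0; rewrite /try_exp big_seq sume_ge0 // => p pc.
by rewrite mule_ge0 ?lee_fin ?selection_ge0 ?integral_ge0.
Qed.

Lemma try_expZ (k : \bar R) (phi : X -> \bar R) : 0 <= k ->
  (forall x, 0 <= phi x) -> measurable_fun setT phi ->
  try_exp f t c (fun x => k * phi x) = k * try_exp f t c phi.
Proof.
move=> k0 phi0 mphi; rewrite /try_exp.
under eq_bigr do rewrite ge0_integralZl // muleCA.
rewrite big_seq_cond [in RHS]big_seq_cond ge0_sume_distrr // => p /andP[pc _].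
by rewrite mule_ge0 ?lee_fin ?selection_ge0 ?integral_ge0.
Qed.

Lemma try_expD (phi psi : X -> \bar R) :
  (forall x, 0 <= phi x) -> measurable_fun setT phi ->
  (forall x, 0 <= psi x) -> measurable_fun setT psi ->
  try_exp f t c (fun x => phi x + psi x) = try_exp f t c phi + try_exp f t c psi.
Proof.
move=> phi0 mphi psi0 mpsi; rewrite /try_exp -big_split /=.
by apply: eq_bigr => p _; rewrite ge0_integralD // ge0_muleDr ?integral_ge0.
Qed.

Lemma le_try_exp (phi psi : X -> \bar R) : (forall x, 0 <= phi x) ->
  measurable_fun setT phi -> measurable_fun setT psi ->
  (forall x, phi x <= psi x) -> try_exp f t c phi <= try_exp f t c psi.
Proof.
move=> phi0 mphi mpsi le_phi; rewrite /try_exp big_seq [leRHS]big_seq.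
apply: lee_sum => p pc; rewrite lee_wpmul2l ?lee_fin ?selection_ge0 //.
exact: ge0_le_integral.
Qed.

Lemma mul_total_weight_try_exp (b : R) (phi : X -> \bar R) : (forall x, 0 <= phi x) ->
  (b * total_weight c)%:E * try_exp f t c phi =
  \sum_(p <- c) ((p.2 * b)%:E * \int[f t p.1]_x phi x).
Proof.
move=> phi0; have [W0|W_neq0] := eqVneq (total_weight c) 0%R.
  rewrite W0 mulr0 mul0e big_seq big1 // => p pc.
  by rewrite total_weight_eq0 // mul0r mul0e.
rewrite /try_exp big_seq [RHS]big_seq ge0_sume_distrr => [|p pc]; last first.
  by rewrite mule_ge0 ?lee_fin ?selection_ge0 ?integral_ge0.
by apply: eq_bigr => p _; rewrite muleA -EFinM; congr (_%:E * _); field.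
Qed.

Variable G : X -> R.
Hypothesis mG : measurable_fun setT G.

Lemma try_exp_reject_accept_sum :
  try_exp f t c (fun x => if (0 < G x)%R then 0 else 1) +
  try_exp f t c (fun x => if (0 < G x)%R then 1 else 0) =
  (\sum_(p <- c) (p.2 / total_weight c))%:E.
Proof.
have macc (u v : \bar R) : measurable_fun setT (fun x => if (0 < G x)%R then u else v).
  by apply: measurable_fun_accept => //; exact: measurable_cst.
rewrite -try_expD ?macc // => [|x|x]; try by case: ifP.
rewrite (_ : (fun x => _) = fun=> 1); last first.
  by apply/funext => x; case: ifP; rewrite ?add0e ?adde0.
rewrite /try_exp -sumEFin; apply: eq_bigr => p _.
have -> : \int[f t p.1]_x 1 = \int[f t p.1]_x cst 1 x by [].
by rewrite integral_cst // prob_kernel !mule1.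
Qed.

(* [z != 0] excludes a configuration of total weight zero, on which [try_exp]
   vanishes identically. *)
Lemma try_exp_reject_accept : exists x z : R, [/\ (0 <= x)%R, (0 <= z)%R,
  try_exp f t c (fun x => if (0 < G x)%R then 0 else 1) = x%:E,
  try_exp f t c (fun x => if (0 < G x)%R then 1 else 0) = z%:E &
  z != 0%R -> (x + z = 1)%R].
Proof.
have := try_exp_reject_accept_sum; set rej := try_exp _ _ _ _; set acc := try_exp _ _ _ _.
move=> rej_acc; have rej0 : 0 <= rej by apply: try_exp_ge0 => x; case: ifP.
have acc0 : 0 <= acc by apply: try_exp_ge0 => x; case: ifP.
have : rej + acc \is a fin_num by rewrite rej_acc.
rewrite fin_numD => /andP[/fineK rejE /fineK accE].
exists (fine rej), (fine acc); split; rewrite ?fine_ge0 // => acc_neq0.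
move: rej_acc; rewrite -rejE -accE -EFinD -big_distrl -/(total_weight c) => -[xz].
have [W0|W_neq0] := eqVneq (total_weight c) 0%R; last by rewrite xz divff.
move: xz; rewrite W0 invr0 mulr0 => /eqP; rewrite paddr_eq0 ?fine_ge0 // => /andP[_].
by rewrite (negbTE acc_neq0).
Qed.

Lemma try_exp_accept_eq0 (H : X -> \bar R) :
  (forall x, 0 <= H x) -> measurable_fun setT H ->
  try_exp f t c (fun x => if (0 < G x)%R then 1 else 0) = 0 ->
  try_exp f t c (fun x => if (0 < G x)%R then H x else 0) = 0.
Proof.
move=> H0 mH acc0.
have macc1 : measurable_fun setT (fun x => if (0 < G x)%R then (1 : \bar R) else 0).
  by apply: measurable_fun_accept => //; exact: measurable_cst.
apply/eqP; rewrite eq_le try_exp_ge0 ?andbT => [|x]; last by case: ifP.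
apply: (@le_trans _ _ (+oo * try_exp f t c (fun x => if (0 < G x)%R then 1 else 0)));
  last by rewrite acc0 mule0.
rewrite -try_expZ // => [|x]; last by case: ifP.
apply: le_try_exp.
- by move=> x; case: ifP.
- by apply: measurable_fun_accept => //; exact: measurable_cst.
- by apply: emeasurable_funM => //; exact: measurable_cst.
- by move=> x; case: ifP; rewrite ?mule1 ?mule0 ?leey.
Qed.

End selection_step.

Section extended_alive_particle_filter.
Context {R : realType} {d dy : measure_display}.
Context {X : measurableType d} {Y : measurableType dy}.
Variables (f : nat -> R.-pker X ~> X) (g : nat -> X -> Y -> R) (y : nat -> Y).
Hypothesis g_ge0 : forall t x y', (0 <= g t x y')%R.
Hypothesis g_meas : forall t, measurable_fun setT (fun x => g t x (y t)).
Variable N : nat.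
Hypothesis N_gt0 : (0 < N)%N.

Lemma apf_step_exp_weighted_sum t (c : seq (X * R)) (a : R) (q : X -> \bar R) :
  (forall p, p \in c -> (0 <= p.2)%R) -> (0 <= a)%R ->
  (forall x, 0 <= q x) -> measurable_fun setT q ->
  apf_step_exp N f g y t c
    (fun c' P => \sum_(p <- c') ((p.2 * (a / P.-1%:R))%:E * q p.1)) =
  a%:E * try_exp f t c (fun x => (g t x (y t))%:E * q x).
Proof.
move=> c_ge0 a0 q0 mq; set G := fun x => g t x (y t); set E := try_exp f t c.
pose gq x : \bar R := (G x)%:E * q x.
pose beta (P : nat) : \bar R := (a / P.-1%:R)%:E.
have gq0 x : 0 <= gq x by rewrite mule_ge0 ?lee_fin ?g_ge0.
have mgq : measurable_fun setT gq.
  by apply: emeasurable_funM => //; apply/measurable_EFinP; exact: g_meas.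
have beta0 P : 0 <= beta P by rewrite lee_fin divr_ge0.
have accgq : E gq = E (fun x => if (0 < G x)%R then gq x else 0).
  congr E; apply/funext => x; case: ifPn => //; rewrite -leNgt => Gx_le0.
  by rewrite /gq (_ : G x = 0%R) ?mul0e //; apply/eqP; rewrite eq_le Gx_le0 g_ge0.
rewrite -/E -/gq accgq /apf_step_exp.
rewrite (_ : (fun outs => _) = fun outs : seq (nat * X) =>
    (0 + \sum_(o <- take N outs) gq o.2) *
    beta (0 + sumn [seq o.1 | o <- outs])%N); last first.
  apply/funext => outs; rewrite add0e add0n big_map ge0_sume_distrl //.
  by apply: eq_bigr => o _; rewrite /gq /beta /= EFinM muleAC.
have [x [z [x0 z0 rejE accE xz]]] := try_exp_reject_accept f t c_ge0 (g_meas t).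
have := loops_exp_take_count (try_exp_ge0 f t c_ge0) (try_expZ f t c_ge0)
  (try_expD f t c) (g_meas t) x0 z0 rejE accE gq0 mgq 0 beta0 (leqnSn N) (lexx 0).
rewrite -/G -/E => ->; rewrite mul0e add0e succnK; set muH := E _.
have [z_eq0|/[dup] z_neq0 /xz {}xz] := eqVneq z 0%R.
  have -> : muH = 0 by apply: try_exp_accept_eq0 => //; rewrite accE z_eq0.
  by rewrite !mule0 mul0e.
have x_lt1 : (x < 1)%R by rewrite -xz ltrDl lt_def z_neq0 z0.
rewrite /beta negbin_series_inv_pred // (_ : 1 - x = z)%R; last first.
  by rewrite -xz addrC addKr.
rewrite muleAC -EFinM; congr (_%:E * _).
have N_neq0 : (N%:R : R) != 0%R by rewrite pnatr_eq0 -lt0n.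
by rewrite exprVn; field; rewrite N_neq0 expf_neq0.
Qed.

Lemma obs_density_ge0 t len x : 0 <= obs_density f g y t len x.
Proof.
elim: len t x => [|len IH] t x //=.
by apply: integral_ge0 => x' _; rewrite mule_ge0 ?lee_fin.
Qed.

Lemma measurable_obs_density t len : measurable_fun setT (obs_density f g y t len).
Proof.
elim: len t => [|len IH] t /=; first exact: measurable_cst.
apply: (measurable_fun_integral_kernel (measurable_kernel (f t))).
  by move=> x'; rewrite mule_ge0 ?lee_fin ?obs_density_ge0.
by apply: emeasurable_funM => //; apply/measurable_EFinP; exact: g_meas.
Qed.

Lemma eq_apf_step_exp t (c : seq (X * R)) (Phi1 Phi2 : seq (X * R) -> nat -> \bar R) :
  (forall c' P, (forall p, p \in c' -> (0 <= p.2)%R) -> Phi1 c' P = Phi2 c' P) ->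
  apf_step_exp N f g y t c Phi1 = apf_step_exp N f g y t c Phi2.
Proof.
move=> Phi12; congr loops_exp; apply/funext => outs; apply: Phi12 => p.
by case/mapP => o _ ->; exact: g_ge0.
Qed.

Lemma apf_cond_exp_prod_weights s h (c : seq (X * R)) (b : R) :
  (forall p, p \in c -> (0 <= p.2)%R) -> (0 <= b)%R ->
  apf_cond_exp N f g y s h c (fun zs =>
    (b * total_weight c)%:E * \prod_(z <- zs) (total_weight z.1 / z.2.-1%:R)%:E)
  = \sum_(p <- c) ((p.2 * b)%:E * obs_density f g y s.+1 h p.1).
Proof.
elim: h s c b => [|h IH] s c b c_ge0 b0.
  by rewrite /= big_nil mule1; under eq_bigr do rewrite mule1;
    rewrite sumEFin -big_distrl mulrC.
rewrite [LHS]/=; transitivity (apf_step_exp N f g y s.+1 c (fun c' P => \sum_(p <- c')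
    ((p.2 * (b * total_weight c / P.-1%:R))%:E * obs_density f g y s.+2 h p.1))).
  apply: eq_apf_step_exp => c' P c'_ge0.
  rewrite -IH ?divr_ge0 ?mulr_ge0 ?total_weight_ge0 //.
  congr apf_cond_exp; apply/funext => zs; rewrite big_cons muleA -EFinM.
  by congr (_%:E * _); rewrite mulrA mulrAC.
rewrite apf_step_exp_weighted_sum ?mulr_ge0 ?total_weight_ge0 //; last 2 first.
- exact: obs_density_ge0.
- exact: measurable_obs_density.
by rewrite mul_total_weight_try_exp // => x; rewrite mule_ge0 ?lee_fin ?obs_density_ge0.
Qed.

End extended_alive_particle_filter.

Theorem lemma3 (R : realType) (d dy : measure_display)
  (X : measurableType d) (Y : measurableType dy)
  (f : nat -> R.-pker X ~> X) (g : nat -> X -> Y -> R) (y : nat -> Y)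
  (N T t h : nat) (c : config X)
  (g_ge0 : forall t' x y', (0 <= g t' x y')%R)
  (g_meas : forall t', measurable_fun setT (fun x => g t' x (y t')))
  (N_ge1 : (1 <= N)%N) (t_le_T : (t <= T)%N) (th : (1 <= t - h)%N)
  (size_c : size c = N) (c_pos : forall p, p \in c -> (0 < p.2)%R) :
  apf_cond_exp N f g y (t - h).-1 h.+1 c
    (fun zs => \prod_(z <- zs)
                 ((total_weight z.1 / (z.2.-1)%:R)%R)%:E)
  = \sum_(p <- c) ((p.2 / total_weight c)%R%:E
                     * obs_density f g y (t - h) h.+1 p.1).
Proof.
have c_ge0 p : p \in c -> (0 <= p.2)%R by move/c_pos/ltW.
have W_gt0 : (0 < total_weight c)%R by rewrite total_weight_gt0 ?size_c.
have W_inv_ge0 : (0 <= (total_weight c)^-1)%R by rewrite invr_ge0 ltW.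
have := apf_cond_exp_prod_weights f g_ge0 g_meas N_ge1 (t - h).-1 h.+1 c_ge0 W_inv_ge0.
rewrite mulVf ?gt_eqF // prednK //; under eq_fun do rewrite mul1e.
by move=> ->.
Qed.
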